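(* Let $0\le j\le n$. (1) Suppose $w\in B_n^j(2143)$ and the $j$ indices $i\in\{1,\ldots,n\}$ with $w(i)>0$ are $1\leq i_1<i_2<\cdots<i_j\leq n$. Then $w(i_1)<w(i_2)<\cdots<w(i_j)$. (2) Suppose $w\in B_n^j(1234)$ and the $j$ indices $i\in\{1,\ldots,n\}$ with $w(i)>0$ are $1\leq i_1<\cdots<i_j\leq n$. Then $w(i_1)>w(i_2)>\cdots>w(i_j)$.
   Context: $B_n$ is the group of permutations $w$ of $\{-n,\ldots,-1,1,\ldots,n\}$ with $w(-i)=-w(i)$. $w$ avoids $1234$ if there are no indices $-n\le a<b<c<d\le n$ (nonzero) with $w(a)<w(b)<w(c)<w(d)$; $w$ avoids $2143$ if there are no such indices with $w(b)<w(a)<w(d)<w(c)$. For $\pi\in\{1234,2143\}$, $B_n^j(\pi)$ is the set of $w\in B_n$ avoiding $\pi$ with $w(i)>0$ for exactly $j$ indices $i\in\{1,\ldots,n\}$. *)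

(* Signed permutations are modelled as functions int -> int
   restricted to the signed index set {-n,...,-1,1,...,n}. *)
From mathcomp Require Import all_boot all_order all_algebra.
Set Implicit Arguments. Unset Strict Implicit. Unset Printing Implicit Defensive.
Import Order.TTheory GRing.Theory Num.Theory.
Local Open Scope ring_scope.

Definition sdom (n : nat) (i : int) : bool := (i != 0) && (`|i|%N <= n)%N.

Definition in_Bn (n : nat) (w : int -> int) : Prop :=
  [/\ forall i, sdom n i -> sdom n (w i),
      {in sdom n &, injective w},
      (forall k, sdom n k -> exists2 i, sdom n i & w i = k)
    & forall i, sdom n i -> w (- i) = - w i].

Definition avoids1234 (n : nat) (w : int -> int) : Prop :=
  ~ exists a b c d, [/\ sdom n a, sdom n b, sdom n c & sdom n d] /\
      [/\ a < b, b < c & c < d] /\ [/\ w a < w b, w b < w c & w c < w d].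

Definition avoids2143 (n : nat) (w : int -> int) : Prop :=
  ~ exists a b c d, [/\ sdom n a, sdom n b, sdom n c & sdom n d] /\
      [/\ a < b, b < c & c < d] /\ [/\ w b < w a, w a < w d & w d < w c].

Definition pos_indices (n : nat) (w : int -> int) : seq int :=
  [seq i <- [seq (k%:Z) | k <- iota 1 n] | 0 < w i].

Definition in_Bnj (n j : nat) (w : int -> int) : Prop :=
  in_Bn n w /\ size (pos_indices n w) = j.

From mathcomp Require Import all_boot all_order all_algebra.
From mathcomp Require Import zify.
Import Order.TTheory GRing.Theory Num.Theory.
Local Open Scope ring_scope.

(* Reflecting two positive positions 0 < x < y through the origin gives the
   positions -y < -x < x < y, which an odd w sends to -w y, -w x, w x, w y.
   If w y < w x this is an occurrence of 2143, and if w x < w y one of 1234;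
   injectivity rules out w x = w y. *)

Lemma sdomN n (i : int) : sdom n (- i) = sdom n i.
Proof. by rewrite /sdom oppr_eq0 abszN. Qed.

Lemma pos_indices_sorted n w : sorted <%R (pos_indices n w).
Proof.
apply: sorted_filter; first exact: lt_trans.
rewrite sorted_map; apply: sub_sorted (iota_ltn_sorted 1 n) => x y /=.
by rewrite ltz_nat.
Qed.

Lemma mem_pos_indices n w x :
  x \in pos_indices n w -> [/\ 0 < x, sdom n x & 0 < w x].
Proof.
rewrite mem_filter => /andP[wx /mapP[k]]; rewrite mem_iota => /andP[k1 kn] xk.
by subst x; split=> //; rewrite /sdom absz_nat; lia.
Qed.

Section PositiveValues.

Variables (n : nat) (w : int -> int).
Hypothesis w_inj : {in sdom n &, injective w}.
Hypothesis w_odd : forall i, sdom n i -> w (- i) = - w i.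

Lemma avoids2143_pos_increasing :
  avoids2143 n w -> {in pos_indices n w &, forall x y, x < y -> w x < w y}.
Proof.
move=> avoid x y /mem_pos_indices[x0 sx wx] /mem_pos_indices[y0 sy wy] xy.
case: ltgtP => // [wyx | wxy].
- case: avoid; exists (- y), (- x), x, y.
  by rewrite !sdomN !w_odd //; split=> //; split; split; lia.
- by move: xy; rewrite (w_inj _ _ sx sy wxy) ltxx.
Qed.

Lemma avoids1234_pos_decreasing :
  avoids1234 n w -> {in pos_indices n w &, forall x y, x < y -> w y < w x}.
Proof.
move=> avoid x y /mem_pos_indices[x0 sx wx] /mem_pos_indices[y0 sy wy] xy.
case: ltgtP => // [wxy | wyx].
- case: avoid; exists (- y), (- x), x, y.
  by rewrite !sdomN !w_odd //; split=> //; split; split; lia.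
- by move: xy; rewrite (w_inj _ _ sy sx wyx) ltxx.
Qed.

End PositiveValues.

Theorem lemma2p1 (n j : nat) : (j <= n)%N ->
  (forall w : int -> int, in_Bnj n j w -> avoids2143 n w ->
     sorted (fun x y => w x < w y) (pos_indices n w)) /\
  (forall w : int -> int, in_Bnj n j w -> avoids1234 n w ->
     sorted (fun x y => w x > w y) (pos_indices n w)).
Proof.
move=> _; split=> w [[_ w_inj _ w_odd] _] avoid;
  apply: sub_in_sorted (allss _) (pos_indices_sorted n w).
- exact: avoids2143_pos_increasing.
- exact: avoids1234_pos_decreasing.
Qed.
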